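(* For every $k\geq 1$, $\mathcal{L}_{\mathsf{SAFA}(|H|=k)}\subsetneq\mathcal{L}_{\mathsf{SAFA}(|H|=k+1)}$, where $\mathcal{L}_{\mathsf{SAFA}(|H|=j)}$ denotes the class of data languages accepted by SAFA $M=(Q,\Sigma\times D,q_0,F,H,\delta)$ with exactly $|H|=j$ sets.
   Context: $D$ is a fixed countably infinite set of data values; for a finite alphabet $\Sigma$, a data language is a subset of $(\Sigma\times D)^*$. A set augmented finite automaton (SAFA) is a tuple $M=(Q,\Sigma\times D,q_0,F,H,\delta)$: $Q$ finite set of states, $q_0\in Q$ initial, $F\subseteq Q$ final, $H=\{h_1,\dots,h_m\}$ a finite collection of (names of) sets of data values, $\delta\subseteq Q\times\Sigma\times C\times OP\times Q$ with $C=\{p(h_i),\,!p(h_i): h_i\in H\}$, $OP=\{-\}\cup\{\mathsf{ins}(h_i):h_i\in H\}$. Configurations are $(q,\langle S_1,\dots,S_m\rangle)$ with $S_i\subseteq D$ finite; initially state $q_0$ and all sets empty. On reading $(a,d)$, a transition $(q,a,\alpha,op,q')$ from the current state may be taken if $\alpha=p(h_i)$ and $d\in S_i$, or $\alpha=\,!p(h_i)$ and $d\notin S_i$; then the state becomes $q'$ and if $op=\mathsf{ins}(h_j)$ the value $d$ is added to $S_j$ ($op=-$ changes nothing). A word is accepted if some run reads it entirely and ends in $F$. *)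

From mathcomp Require Import all_boot.
Set Implicit Arguments. Unset Strict Implicit. Unset Printing Implicit Defensive.

(* Conditions p(h_i) / !p(h_i) over the set names H = 'I_m. *)
Inductive cond (m : nat) : Type :=
  | Cin  of 'I_m
  | Cnot of 'I_m.

(* Operations: None = "-", Some j = ins(h_j). *)
Definition op (m : nat) := option 'I_m.

Record SAFA (Sigma : finType) (m : nat) : Type := {
  st    : finType;
  q0    : st;
  final : pred st;
  delta : st -> Sigma -> cond m -> op m -> st -> bool
}.

Section Sem.
Variables (D : countType) (Sigma : finType) (m : nat).

Definition sets := 'I_m -> seq D.

Definition sat (c : cond m) (S : sets) (d : D) : bool :=
  match c with
  | Cin i => d \in S i
  | Cnot i => d \notin S i
  end.

Definition upd (o : op m) (S : sets) (d : D) : sets :=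
  match o with
  | None => S
  | Some j => fun i => if i == j then d :: S i else S i
  end.

Fixpoint acc_from (M : SAFA Sigma m) (q : st M) (S : sets) (w : seq (Sigma * D)) : Prop :=
  match w with
  | [::] => final q
  | (a, d) :: w' =>
      exists (c : cond m) (o : op m) (q' : st M),
        [/\ delta q a c o q', sat c S d & acc_from q' (upd o S d) w']
  end.

Definition accepts (M : SAFA Sigma m) (w : seq (Sigma * D)) : Prop :=
  acc_from (q0 M) (fun _ => [::]) w.

Definition in_SAFA_class (L : seq (Sigma * D) -> Prop) : Prop :=
  exists M : SAFA Sigma m, forall w, L w <-> accepts M w.

End Sem.

From mathcomp Require Import all_boot zify.

(* With k + 1 sets one accepts the words in which every data value occurs at
   most k + 1 times: each occurrence of a value inserts it into a set not yet
   containing it.  With k sets one cannot.  Read (d_0 ... d_(N-1))^(k+1) for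
   distinct d_i; the type of d_i (the names of the sets containing it) only
   grows and has at most k elements, so at one of its k + 1 occurrences, in some
   round r, reading d_i changes no set.  For N large two values d_a, d_b, a < b,
   share this round and their type there; reading d_a in place of that d_b then
   follows the same run, so a word in which d_a occurs k + 2 times is accepted.
   The inclusion holds because a SAFA may ignore an extra set. *)
Set Implicit Arguments. Unset Strict Implicit. Unset Printing Implicit Defensive.

Section Configurations.
Variables (D : countType) (Sigma : finType) (m : nat).

Definition same_sets (S S' : sets D m) := forall i, S i =i S' i.

Lemma sat_same_sets c S S' d : same_sets S S' -> sat c S d = sat c S' d.
Proof. by case: c => i /= eqSS'; rewrite eqSS'. Qed.

Lemma upd_same_sets o S S' d :
  same_sets S S' -> same_sets (upd o S d) (upd o S' d).
Proof. by case: o => [j|] //= eqSS' i x; case: (i == j); rewrite ?in_cons eqSS'. Qed.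

Lemma acc_from_same_sets (M : SAFA Sigma m) (w : seq (Sigma * D)) (q : st M) S S' :
  same_sets S S' -> acc_from q S w -> acc_from q S' w.
Proof.
elim: w q S S' => [|[a d] w IHw] q S S' eqSS' //= [c [o [q' [dq satc accw]]]].
exists c, o, q'; split=> //; first by rewrite -(sat_same_sets _ _ eqSS').
exact: IHw (upd_same_sets _ _ eqSS') accw.
Qed.

Definition data_type (S : sets D m) (d : D) : {set 'I_m} := [set i | d \in S i].

Lemma data_type_same_sets S S' d :
  same_sets S S' -> data_type S d = data_type S' d.
Proof. by move=> eqSS'; apply/setP => i; rewrite !inE eqSS'. Qed.

Lemma data_type_nil d : data_type (fun _ => [::]) d = set0.
Proof. by apply/setP => i; rewrite !inE. Qed.

Lemma data_type_ins S i d e :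
  data_type (upd (Some i) S d) e = if d == e then i |: data_type S e else data_type S e.
Proof.
apply/setP => x; case: (eqVneq d e) => [<-|neq_de]; rewrite !inE /=.
  by case: (x == i); rewrite ?in_cons ?eqxx.
by case: (x == i); rewrite // in_cons eq_sym (negPf neq_de).
Qed.

Lemma data_type_upd_sub o S d e : data_type S e \subset data_type (upd o S d) e.
Proof.
case: o => [i|] //=; rewrite data_type_ins.
by case: (d == e) => //; apply: subsetUr.
Qed.

Lemma data_type_upd_other o S d e :
  d != e -> data_type (upd o S d) e = data_type S e.
Proof. by case: o => [i|] //= /negPf neq_de; rewrite data_type_ins neq_de. Qed.

Definition data_count (d : D) (w : seq (Sigma * D)) := count (fun x => x.2 == d) w.

Definition at_most_occ (j : nat) (w : seq (Sigma * D)) := forall d, data_count d w <= j.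

End Configurations.

Section Counter.
Variables (D : countType) (Sigma : finType) (j : nat).

(* Reading [d] inserts it into a set not yet containing it, so [d] can be read
   at most [j] times. *)
Definition counter_safa : SAFA Sigma j :=
  @Build_SAFA Sigma j unit tt predT
    (fun _ _ c o _ => if (c, o) is (Cnot i, Some i') then i == i' else false).

Lemma card_data_type_ins (S : sets D j) i d e : i \notin data_type S d ->
  #|data_type (upd (Some i) S d) e| = (d == e) + #|data_type S e|.
Proof. by rewrite data_type_ins; case: eqP => [<- i_new|//]; rewrite cardsU1 i_new. Qed.

Lemma acc_counter (w : seq (Sigma * D)) (S : sets D j) :
  acc_from (tt : st counter_safa) S w <->
  forall d, data_count d w + #|data_type S d| <= j.
Proof.
elim: w S => [|[a d] w IHw] S /=.
  by split=> // _ e; rewrite add0n; apply: leq_trans (max_card _) _; rewrite card_ord.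
split.
  move=> [[i|i] [[i'|] [[] []]]] //= /eqP <- i_new /IHw countw e.
  have := countw e; rewrite card_data_type_ins ?inE //.
  by rewrite /data_count /= eq_sym; lia.
move=> countw.
have [i i_new|full] := pickP [pred i | i \notin data_type S d].
  exists (Cnot i), (Some i), tt; split=> //=; first by move: i_new; rewrite /= inE.
  apply/IHw => e; rewrite card_data_type_ins //.
  by have := countw e; rewrite /data_count /= eq_sym; lia.
have type_full : data_type S d = setT.
  by apply/setP => i; have /negbFE -> := full i; rewrite inE.
by have := countw d; rewrite type_full cardsT card_ord /data_count /= eqxx; lia.
Qed.

Lemma at_most_occ_in_class : in_SAFA_class j (@at_most_occ D Sigma j).
Proof.
exists counter_safa => w; rewrite /accepts acc_counter.
by split=> countw d; have := countw d; rewrite data_type_nil cards0 addn0.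
Qed.

End Counter.

Section Widen.
Variables (D : countType) (Sigma : finType) (k : nat).

Definition widen_cond (c : cond k) : cond k.+1 :=
  match c with Cin i => Cin (lift ord_max i) | Cnot i => Cnot (lift ord_max i) end.

Definition unwiden_cond (c : cond k.+1) : option (cond k) :=
  match c with
  | Cin i => omap (@Cin k) (unlift ord_max i)
  | Cnot i => omap (@Cnot k) (unlift ord_max i)
  end.

Definition widen_op (o : op k) : op k.+1 := omap (lift ord_max) o.

Definition unwiden_op (o : op k.+1) : option (op k) :=
  if o is Some i then omap Some (unlift ord_max i) else Some None.

Lemma widen_condK : pcancel widen_cond unwiden_cond.
Proof. by case=> i /=; rewrite liftK. Qed.

Lemma widen_opK : pcancel widen_op unwiden_op.
Proof. by case=> [i|] //=; rewrite liftK. Qed.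

Lemma unwiden_condK c c0 : unwiden_cond c = Some c0 -> c = widen_cond c0.
Proof. by case: c => i /=; case: unliftP => // j -> [<-]. Qed.

Lemma unwiden_opK o o0 : unwiden_op o = Some o0 -> o = widen_op o0.
Proof. by case: o => [i|[<-]] //=; case: unliftP => // j -> [<-]. Qed.

(* The new set [ord_max] is never tested nor updated. *)
Definition widen_safa (M : SAFA Sigma k) : SAFA Sigma k.+1 :=
  @Build_SAFA Sigma k.+1 _ (q0 M) (@final _ _ M)
    (fun q a c o q' => if (unwiden_cond c, unwiden_op o) is (Some c0, Some o0)
                       then delta q a c0 o0 q' else false).

Definition extends_sets (S : sets D k) (S' : sets D k.+1) :=
  forall i, S' (lift ord_max i) =i S i.

Lemma sat_widen_cond c S S' d :
  extends_sets S S' -> sat (widen_cond c) S' d = sat c S d.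
Proof. by case: c => i /= extSS'; rewrite extSS'. Qed.

Lemma extends_sets_upd S S' o d :
  extends_sets S S' -> extends_sets (upd o S d) (upd (widen_op o) S' d).
Proof.
case: o => [j|] //= extSS' i x.
by rewrite (inj_eq lift_inj); case: (i == j); rewrite ?in_cons extSS'.
Qed.

Lemma acc_widen_safa (M : SAFA Sigma k) (w : seq (Sigma * D)) (q : st M) S S' :
  extends_sets S S' ->
  acc_from q S w <-> acc_from (q : st (widen_safa M)) S' w.
Proof.
elim: w q S S' => [|[a d] w IHw] q S S' extSS' //=.
split=> [[c [o [q' [dq satc accw]]]]|[c [o [q' []]]]].
  exists (widen_cond c), (widen_op o), q'.
  rewrite /= widen_condK widen_opK (sat_widen_cond _ _ extSS'); split=> //.
  exact/(IHw _ _ _ (extends_sets_upd _ _ extSS')).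
rewrite /=; case Ec: (unwiden_cond c) => [c0|//]; case Eo: (unwiden_op o) => [o0|//].
rewrite (unwiden_condK Ec) (unwiden_opK Eo) (sat_widen_cond _ _ extSS') => dq satc accw.
exists c0, o0, q'; split=> //.
exact/(IHw _ _ _ (extends_sets_upd _ _ extSS')).
Qed.

Lemma in_SAFA_class_succ (L : seq (Sigma * D) -> Prop) :
  in_SAFA_class k L -> in_SAFA_class k.+1 L.
Proof.
move=> [M acceptsM]; exists (widen_safa M) => w; rewrite acceptsM.
by apply: acc_widen_safa.
Qed.

End Widen.

Lemma proper_chain_card (T : finType) (G : nat -> {set T}) n :
  (forall r, r < n -> G r \proper G r.+1) -> n <= #|G n|.
Proof.
elim: n => // n IHn proper_G.
have := proper_card (proper_G n (ltnSn n)).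
by have := IHn (fun r lt_rn => proper_G r (ltnW lt_rn)); lia.
Qed.

Section Runs.
Variables (D : countType) (Sigma : finType) (k : nat) (M : SAFA Sigma k)
  (x0 : Sigma * D).

(* The set contents along a run are only fixed up to [same_sets], so that a run
   survives substituting a data value by one whose reading changes no set. *)
Definition run (q : st M) (S : sets D k) (w : seq (Sigma * D))
  (qs : nat -> st M) (Ss : nat -> sets D k) :=
  [/\ qs 0 = q, Ss 0 = S,
     forall p, p < size w -> exists c o,
       [/\ delta (qs p) (nth x0 w p).1 c o (qs p.+1),
           sat c (Ss p) (nth x0 w p).2 &
           same_sets (Ss p.+1) (upd o (Ss p) (nth x0 w p).2)]
   & final (qs (size w))].

Lemma acc_fromP (w : seq (Sigma * D)) (q : st M) S :
  acc_from q S w <-> exists qs Ss, run q S w qs Ss.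
Proof.
elim: w q S => [|[a d] w IHw] q S /=.
  by split=> [final_q|[qs [Ss [<- _ _ //]]]]; exists (fun _ => q), (fun _ => S).
split=> [[c [o [q' [dq satc /IHw [qs [Ss [qs0 Ss0 steps final_qs]]]]]]]|].
  exists (fun p => if p is p'.+1 then qs p' else q).
  exists (fun p => if p is p'.+1 then Ss p' else S).
  split=> // [[|p]] /= ltp; last exact: steps.
  by exists c, o; rewrite qs0 Ss0.
move=> [qs [Ss [qs0 Ss0 steps final_qs]]].
have [c [o [dq satc same1]]] := steps 0 (ltn0Sn _).
exists c, o, (qs 1); rewrite -qs0 -Ss0; split=> //.
apply: acc_from_same_sets same1 _.
by apply/IHw; exists (qs \o succn), (Ss \o succn); split=> // p /(steps p.+1).
Qed.

Section OneRun.
Variables (q : st M) (S : sets D k) (w : seq (Sigma * D)).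
Variables (qs : nat -> st M) (Ss : nat -> sets D k).
Hypothesis run_w : run q S w qs Ss.

Lemma run_type_step p d : p < size w ->
  exists o, data_type (Ss p.+1) d = data_type (upd o (Ss p) (nth x0 w p).2) d.
Proof.
case: run_w => _ _ steps _ /steps [c [o [_ _ same_next]]].
by exists o; apply: data_type_same_sets.
Qed.

Lemma run_type_mono p p' d : p <= p' <= size w ->
  data_type (Ss p) d \subset data_type (Ss p') d.
Proof.
elim: p' => [|p' IHp'] /andP [le_pp' le_p'w]; first by case: p le_pp'.
case: (eqVneq p p'.+1) => [-> //|neq_pp'].
have [o ->] := run_type_step d le_p'w.
by apply: subset_trans (IHp' _) (data_type_upd_sub _ _ _ _); lia.
Qed.

Lemma run_type_unread p p' d : p <= p' <= size w ->
  (forall t, p <= t < p' -> (nth x0 w t).2 != d) ->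
  data_type (Ss p') d = data_type (Ss p) d.
Proof.
elim: p' => [|p' IHp'] /andP [le_pp' le_p'w] unread; first by case: p le_pp' unread.
case: (eqVneq p p'.+1) => [-> //|neq_pp'].
have [o ->] := run_type_step d le_p'w.
rewrite data_type_upd_other; last by apply: unread; lia.
by apply: IHp' => [|t le_t]; [lia | apply: unread; lia].
Qed.

(* Every set the step inserts [y] into already contains [y], hence also [x]:
   reading [x] instead changes no set either. *)
Lemma run_subst p x (y := (nth x0 w p).2) : p < size w ->
  data_type (Ss p.+1) y = data_type (Ss p) y ->
  data_type (Ss p) x = data_type (Ss p) y ->
  run q S (set_nth x0 w p ((nth x0 w p).1, x)) qs Ss.
Proof.
move=> ltpw stat_y same_xy.
have memx i : (x \in Ss p i) = (y \in Ss p i).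
  by move/setP: same_xy => /(_ i); rewrite !inE.
have memy i : (y \in Ss p.+1 i) = (y \in Ss p i).
  by move/setP: stat_y => /(_ i); rewrite !inE.
case: run_w => qs0 Ss0 steps final_qs.
have size_subst : size (set_nth x0 w p ((nth x0 w p).1, x)) = size w.
  by rewrite size_set_nth; apply/maxn_idPr.
split=> //; last by rewrite size_subst.
move=> t; rewrite size_subst nth_set_nth /= => /steps.
case: (eqVneq t p) => [-> {t}|_ //] [c [o [dq satc same_next]]].
exists c, o; split=> //; first by case: c satc {dq} => i /=; rewrite memx.
move=> i z; rewrite same_next; case: o same_next {dq} => [j|//] same_next /=.
case: (eqVneq i j) => [-> {i}|//].
have yj : y \in Ss p j by rewrite -memy same_next /= eqxx in_cons eqxx.
rewrite -/y !in_cons; case: (eqVneq z y) => [->|_]; first by rewrite yj !orbT.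
by case: (eqVneq z x) => [->|_] //=; rewrite memx yj.
Qed.

(* Along [k + 1] readings the type of [d], a subset of the [k] set names, cannot
   grow every time. *)
Lemma run_stationary_read (p : nat -> nat) d :
  {homo p : r s / r < s} -> p k < size w ->
  exists r : 'I_k.+1, data_type (Ss (p r).+1) d = data_type (Ss (p r)) d.
Proof.
move=> incr_p ltpkw.
case: (pickP (fun r : 'I_k.+1 => data_type (Ss (p r).+1) d == data_type (Ss (p r)) d)).
  by move=> r /eqP stat_r; exists r.
move=> moving; exfalso.
have grows r : r <= k -> data_type (Ss (p r)) d \proper data_type (Ss (p r).+1) d.
  move=> le_rk; have ltprw : p r < size w.
    exact: leq_ltn_trans (ltnW_homo incr_p le_rk) ltpkw.
  rewrite properEneq eq_sym (moving (Ordinal (le_rk : r < k.+1))) /=.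
  by have [o ->] := run_type_step d ltprw; apply: data_type_upd_sub.
have chain : k <= #|data_type (Ss (p k)) d|.
  apply: (@proper_chain_card _ (fun r => data_type (Ss (p r)) d) k) => r ltrk.
  apply: proper_sub_trans (grows r (ltnW ltrk)) (run_type_mono _ _).
  by have := incr_p _ _ (ltnSn r); have := ltnW_homo incr_p ltrk; lia.
have := proper_card (grows k (leqnn k)); have := max_card (data_type (Ss (p k).+1) d).
by rewrite card_ord; lia.
Qed.

End OneRun.

End Runs.

Section Rounds.
Variables (D : countType) (Sigma : finType) (a0 : Sigma) (f : nat -> D).
Hypothesis f_inj : injective f.

Definition round_word N : seq (Sigma * D) := [seq (a0, d) | d <- mkseq f N].

Definition rounds_word n N := flatten (nseq n (round_word N)).

Lemma rounds_wordS n N : rounds_word n.+1 N = round_word N ++ rounds_word n N.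
Proof. by []. Qed.

Lemma size_rounds_word n N : size (rounds_word n N) = n * N.
Proof.
by elim: n => // n IHn; rewrite rounds_wordS size_cat IHn size_map size_mkseq mulSn.
Qed.

Lemma nth_rounds_word x0 n N r i : r < n -> i < N ->
  nth x0 (rounds_word n N) (r * N + i) = (a0, f i).
Proof.
elim: r n => [|r IHr] [|n] // ltrn ltiN.
all: rewrite rounds_wordS nth_cat size_map size_mkseq.
  by rewrite mul0n add0n ltiN (nth_map (f 0)) ?size_mkseq // nth_mkseq.
by rewrite mulSn -addnA ltnNge leq_addr /= addKn IHr.
Qed.

Lemma data_count_round_word N d : data_count d (round_word N) = (d \in mkseq f N).
Proof.
rewrite /data_count count_map; apply: count_uniq_mem.
by rewrite map_inj_uniq // iota_uniq.
Qed.

Lemma data_count_rounds_word n N d :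
  data_count d (rounds_word n N) = n * (d \in mkseq f N).
Proof.
rewrite -data_count_round_word.
by elim: n => // n IHn; rewrite mulSn -IHn -count_cat.
Qed.

Lemma at_most_occ_rounds_word n N : at_most_occ n (rounds_word n N).
Proof.
by move=> d; rewrite data_count_rounds_word -[leqRHS]muln1 leq_mul2l leq_b1 orbT.
Qed.

End Rounds.

Section Pumping.
Variables (D : countType) (Sigma : finType) (a0 : Sigma) (f : nat -> D).
Hypothesis f_inj : injective f.
Variables (k N : nat) (M : SAFA Sigma k).
Hypothesis N_large : #|{: 'I_k.+1 * {set 'I_k}}| < N.

Let x0 := (a0, f 0).
Let w := rounds_word a0 f k.+1 N.
Let pos (r i : nat) := r * N + i.

Variables (q : st M) (S : sets D k) (qs : nat -> st M) (Ss : nat -> sets D k).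
Hypothesis run_w : run x0 q S w qs Ss.

Definition stationary (r i : nat) :=
  data_type (Ss (pos r i).+1) (f i) = data_type (Ss (pos r i)) (f i).

Lemma N_gt0 : 0 < N.
Proof. exact: leq_ltn_trans N_large. Qed.

Lemma pos_lt_size (r : 'I_k.+1) (i : 'I_N) : pos r i < size w.
Proof. by rewrite size_rounds_word /pos; have := ltn_ord r; have := ltn_ord i; nia. Qed.

Lemma nth_pos (r : 'I_k.+1) (i : 'I_N) : nth x0 w (pos r i) = (a0, f i).
Proof. exact: nth_rounds_word. Qed.

Lemma exists_stationary_round (i : 'I_N) : exists r : 'I_k.+1, stationary r i.
Proof.
apply: (run_stationary_read run_w (p := pos ^~ i)).
  by move=> r s lt_rs; rewrite /pos ltn_add2r ltn_pmul2r ?N_gt0.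
exact: (pos_lt_size ord_max i).
Qed.

(* Pigeonhole: [N] values, but fewer than [N] pairs (round, type). *)
Lemma exists_stationary_collision : exists (a b : 'I_N) (r : 'I_k.+1),
  [/\ a < b, stationary r a, stationary r b &
      data_type (Ss (pos r a)) (f a) = data_type (Ss (pos r b)) (f b)].
Proof.
have [round stat_round] := fin_all_exists exists_stationary_round.
pose g i := (round i, data_type (Ss (pos (round i) i)) (f i)).
have /injectivePn [a [b neq_ab [same_round same_type]]] : ~~ injectiveb g.
  by apply/injectiveP => /leq_card; rewrite card_ord leqNgt N_large.
have stat_a : stationary (round b) a by rewrite -same_round.
have stat_b := stat_round b.
rewrite same_round in same_type.
case: (ltngtP a b) => [lt_ab|lt_ba|/val_inj eq_ab].
- by exists a, b, (round b).
- by exists b, a, (round b).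
- by rewrite eq_ab eqxx in neq_ab.
Qed.

Lemma exists_overfull_acc :
  exists w' : seq (Sigma * D), acc_from q S w' /\ ~ at_most_occ k.+1 w'.
Proof.
have [a [b [r [lt_ab stat_a stat_b same_type]]]] := exists_stationary_collision.
have fb_pos := nth_pos r b.
have unread : data_type (Ss (pos r b)) (f a) = data_type (Ss (pos r a).+1) (f a).
  apply: (run_type_unread run_w) => [|t /andP [lt_at lt_tb]].
    by have := pos_lt_size r b; rewrite /pos; lia.
  rewrite /pos in lt_at lt_tb; have -> : t = r * N + (t - r * N) by lia.
  have ltbN := ltn_ord b; have ltrk := ltn_ord r.
  by rewrite nth_rounds_word /= ?(inj_eq f_inj) 1?neq_ltn; lia.
have same_fa_fb : data_type (Ss (pos r b)) (f a) = data_type (Ss (pos r b)) (f b).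
  by rewrite unread stat_a -same_type.
exists (set_nth x0 w (pos r b) ((nth x0 w (pos r b)).1, f a)); split.
  apply/acc_fromP; exists qs, Ss.
  by apply: (run_subst run_w); rewrite ?pos_lt_size // fb_pos.
move=> /(_ (f a)); rewrite /data_count count_set_nth_ltn ?pos_lt_size //.
rewrite -/(data_count _ _) (data_count_rounds_word _ f_inj) fb_pos /=.
rewrite eqxx (inj_eq f_inj).
rewrite /mkseq (mem_map f_inj) mem_iota eq_sym (ltn_eqF lt_ab) ltn_ord.
lia.
Qed.

End Pumping.

Lemma at_most_occ_not_in_class (D : countType) (Sigma : finType) (a0 : Sigma)
  (f : nat -> D) (k : nat) :
  injective f -> ~ in_SAFA_class k (@at_most_occ D Sigma k.+1).
Proof.
move=> f_inj [M acceptsM].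
pose N := #|{: 'I_k.+1 * {set 'I_k}}|.+1.
have /acceptsM/(acc_fromP (a0, f 0)) [qs [Ss run_w]] :=
  at_most_occ_rounds_word a0 f_inj k.+1 N.
have [w' [acc_w' overfull_w']] := exists_overfull_acc f_inj (ltnSn _) run_w.
exact/overfull_w'/acceptsM.
Qed.

Theorem corollary1 (D : countType) (HD : exists f : nat -> D, injective f)
  (Sigma : finType) (a0 : Sigma) (k : nat) (hk : 1 <= k) :
  (forall L : seq (Sigma * D) -> Prop,
      in_SAFA_class k L -> in_SAFA_class k.+1 L) /\
  (exists L : seq (Sigma * D) -> Prop,
      in_SAFA_class k.+1 L /\ ~ in_SAFA_class k L).
Proof.
split; first exact: in_SAFA_class_succ.
have [f f_inj] := HD.
exists (@at_most_occ D Sigma k.+1); split; first exact: at_most_occ_in_class.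
exact: (at_most_occ_not_in_class a0 (k := k) f_inj).
Qed.
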